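(* Let $\gamma\in(0,1)$ and let $\alpha_0,\alpha_1,\dots\in[0,1]$. Define $\delta^1=\alpha_0$, $\lambda^1=\alpha_0^2$ and, for $n>1$, $$\delta^n=\alpha_{n-1}+\big(1-(1-\gamma)\alpha_{n-1}\big)\delta^{n-1},\qquad \lambda^n=\alpha_{n-1}^2+\big(1-(1-\gamma)\alpha_{n-1}\big)^2\lambda^{n-1}.$$ Then for all $n\ge1$, $\delta^n\le \frac{1}{1-\gamma}$ and $\lambda^n\le\frac{1}{\gamma(1-\gamma)}$. *)

From Stdlib Require Import Reals.
Open Scope R_scope.

(* delta_seq g a n and lambda_seq g a n represent the paper's
   delta^n and lambda^n for n >= 1 (the value at n = 0 is an unused filler 0). *)
Fixpoint delta_seq (g : R) (a : nat -> R) (n : nat) : R :=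
  match n with
  | O => 0
  | S O => a O
  | S ((S _) as m) => a m + (1 - (1 - g) * a m) * delta_seq g a m
  end.

Fixpoint lambda_seq (g : R) (a : nat -> R) (n : nat) : R :=
  match n with
  | O => 0
  | S O => (a O) ^ 2
  | S ((S _) as m) => (a m) ^ 2 + ((1 - (1 - g) * a m) ^ 2) * lambda_seq g a m
  end.

(* Both recursions are affine maps [v |-> f a + q a * v] with [0 <= q a], and each
   bound [B] is invariant: [f a + q a * B <= B]. For [delta] this is the identity
   [a + (1 - (1 - g) a) / (1 - g) = 1 / (1 - g)]; for [lambda] it reduces to
   [g a <= 2 - (1 - g) a], true for [a] in [0, 1]. Since both sequences start
   with one step from [0], induction from [0 <= B] gives the bounds. *)
From Stdlib Require Import Reals Lra Psatz.
Open Scope R_scope.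

Section Steps.

Variables g x : R.
Hypothesis hg : 0 < g < 1.
Hypothesis hx : 0 <= x <= 1.

Lemma delta_step_le (d : R) :
  d <= 1 / (1 - g) -> x + (1 - (1 - g) * x) * d <= 1 / (1 - g).
Proof.
  intros hd.
  assert (hq : 0 <= 1 - (1 - g) * x) by nra.
  assert (hfix : x + (1 - (1 - g) * x) * (1 / (1 - g)) = 1 / (1 - g))
    by (field; lra).
  apply Rle_trans with (x + (1 - (1 - g) * x) * (1 / (1 - g))); [|now rewrite hfix].
  apply Rplus_le_compat_l, Rmult_le_compat_l; assumption.
Qed.

Lemma lambda_step_le (l : R) :
  l <= 1 / (g * (1 - g)) ->
  x ^ 2 + (1 - (1 - g) * x) ^ 2 * l <= 1 / (g * (1 - g)).
Proof.
  intros hl.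
  set (M := 1 / (g * (1 - g))) in *.
  assert (hM : M = / g * / (1 - g)) by (unfold M; field; lra).
  assert (hslack : M * (1 - (1 - (1 - g) * x) ^ 2) = x * (2 - (1 - g) * x) / g)
    by (rewrite hM; field; lra).
  assert (hsq : x ^ 2 <= M * (1 - (1 - (1 - g) * x) ^ 2)).
  { rewrite hslack.
    apply Rmult_le_reg_r with g; [lra|].
    unfold Rdiv; rewrite Rmult_assoc, Rinv_l by lra.
    nra. }
  assert ((1 - (1 - g) * x) ^ 2 * l <= (1 - (1 - g) * x) ^ 2 * M)
    by (apply Rmult_le_compat_l; [apply pow2_ge_0 | exact hl]).
  nra.
Qed.

End Steps.

Lemma delta_lambda_seq_le (g : R) (a : nat -> R)
  (hg : 0 < g < 1) (ha : forall k : nat, 0 <= a k <= 1) (n : nat) :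
  delta_seq g a (S n) <= 1 / (1 - g) /\
  lambda_seq g a (S n) <= 1 / (g * (1 - g)).
Proof.
  induction n as [|n [IHd IHl]].
  - assert (hB1 : 0 <= 1 / (1 - g)) by (apply Rlt_le, Rdiv_lt_0_compat; lra).
    assert (hB2 : 0 <= 1 / (g * (1 - g)))
      by (apply Rlt_le, Rdiv_lt_0_compat; nra).
    pose proof (delta_step_le g (a 0%nat) hg (ha 0%nat) 0 hB1) as hd.
    pose proof (lambda_step_le g (a 0%nat) hg (ha 0%nat) 0 hB2) as hl.
    rewrite Rmult_0_r, Rplus_0_r in hd, hl.
    split; assumption.
  - split.
    + exact (delta_step_le g (a (S n)) hg (ha (S n)) _ IHd).
    + exact (lambda_step_le g (a (S n)) hg (ha (S n)) _ IHl).
Qed.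

Theorem proposition2 (g : R) (a : nat -> R)
  (hg : 0 < g < 1) (ha : forall k : nat, 0 <= a k <= 1) :
  forall n : nat, (1 <= n)%nat ->
    delta_seq g a n <= 1 / (1 - g) /\
    lambda_seq g a n <= 1 / (g * (1 - g)).
Proof.
  intros [|n] hn; [lia|].
  exact (delta_lambda_seq_le g a hg ha n).
Qed.
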